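(* Let $A<\mathbb{R}$ be any subring. For any finite set $S\subseteq H(A)''$ there is a non-trivial element $h_S\in H(A)$ commuting with each element of $S$.
   Context: Let $\mathbb{P}^1=\mathbb{P}^1(\mathbb{R})$ with its usual topology (a circle) and the natural action of $\mathrm{PSL}_2(\mathbb{R})$. Let $G$ be the group of homeomorphisms of $\mathbb{P}^1$ which are piecewise in $\mathrm{PSL}_2(\mathbb{R})$ with finitely many pieces, each an interval. Let $\infty\in\mathbb{P}^1$ correspond to the first basis vector of $\mathbb{R}^2$ and $H<G$ its stabilizer. For a subring $A<\mathbb{R}$, $P_A$ is the set of fixed points of hyperbolic elements of $\mathrm{PSL}_2(A)$, $G(A)$ is the subgroup of $G$ of elements piecewise in $\mathrm{PSL}_2(A)$ with all interval endpoints in $P_A$, and $H(A)=G(A)\cap H$. $H(A)''$ denotes the second derived subgroup $[H(A)',H(A)']$, where $H(A)'=[H(A),H(A)]$. *)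

From HB Require Import structures.
From mathcomp Require Import all_boot all_order all_algebra.
From mathcomp Require Import reals.
Set Implicit Arguments. Unset Strict Implicit. Unset Printing Implicit Defensive.
Import Order.TTheory GRing.Theory Num.Theory.
Local Open Scope ring_scope.

Section PiecewiseProjective.
Variable R : realType.

(* P^1(R) = R u {oo}: [Some x] is the line through (x,1), [None] is the line
   through the first basis vector e1 = (1,0), i.e. the point oo. *)
Definition P1 := option R.

Definition mob (g : 'M[R]_2) (p : P1) : P1 :=
  let a := g 0 0 in let b := g 0 1 in let c := g 1 0 in let d := g 1 1 in
  match p with
  | Some x => if c * x + d == 0 then None else Some ((a * x + b) / (c * x + d))
  | None => if c == 0 then None else Some (a / c)
  end.

(* Matrices of SL_2(A) (they represent PSL_2(A); +-g act identically). *)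
Definition SL2 (A : {pred R}) (g : 'M[R]_2) : Prop :=
  \det g = 1 /\ forall i j, g i j \in A.

Definition hyperbolic (g : 'M[R]_2) : Prop := 2 < `|\tr g|.

Definition P_ (A : {pred R}) (p : P1) : Prop :=
  exists g, SL2 A g /\ hyperbolic g /\ mob g p = p.

(* Linear order on P1 with oo as maximum; it induces the circular order. *)
Definition lt1 (p q : P1) : bool :=
  match p, q with
  | Some x, Some y => x < y
  | Some _, None => true
  | None, _ => false
  end.
Definition le1 (p q : P1) : bool := (p == q) || lt1 p q.

(* [arc u v w]: w lies on the closed arc of the circle going (positively)
   from u to v; for u = v this is the whole circle. *)
Definition arc (u v w : P1) : bool :=
  if lt1 u v then le1 u w && le1 w v else le1 u w || le1 w v.

(* Either f is globally one
   element of M (no breakpoints), or there are n >= 1 breakpoints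
   p_0 < ... < p_{n-1} (circularly ordered) and f agrees with g_i on the
   closed arc [p_i, p_{i+1 mod n}]. *)
Definition piecewise (M : 'M[R]_2 -> Prop) (B : P1 -> Prop) (f : P1 -> P1) :=
  (exists g, M g /\ forall p, f p = mob g p) \/
  exists s : seq (P1 * 'M[R]_2),
    [/\ (0 < size s)%N, sorted lt1 (map fst s),
        forall i, (i < size s)%N -> B (nth None (map fst s) i)
                                 /\ M (nth 0 (map snd s) i)
      & forall i, (i < size s)%N -> forall w,
          arc (nth None (map fst s) i) (nth None (map fst s) (i.+1 %% size s)) w ->
          f w = mob (nth 0 (map snd s) i) w].

(* Such maps are automatically continuous (the closed pieces agree at
   the breakpoints and Moebius maps are continuous), hence homeomorphisms
   of the circle, so G(A) is a subset of G. *)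
Definition G_ (A : {pred R}) (f : P1 -> P1) : Prop :=
  bijective f /\ piecewise (SL2 A) (P_ A) f.

Definition H_ (A : {pred R}) (f : P1 -> P1) : Prop := G_ A f /\ f None = None.

End PiecewiseProjective.

Inductive gen (T : Type) (X : (T -> T) -> Prop) : (T -> T) -> Prop :=
| gen_id : gen X id
| gen_mul x f : X x -> gen X f -> gen X (x \o f)
| gen_inv x y f : X x -> (forall p, x (y p) = p) -> (forall p, y (x p) = p) ->
    gen X f -> gen X (y \o f).

Definition commutators (T : Type) (X : (T -> T) -> Prop) (f : T -> T) : Prop :=
  exists a b a' b', [/\ X a, X b,
    (forall p, a (a' p) = p) /\ (forall p, a' (a p) = p),
    (forall p, b (b' p) = p) /\ (forall p, b' (b p) = p)
    & f = a' \o b' \o a \o b].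

Definition derived (T : Type) (X : (T -> T) -> Prop) := gen (commutators X).

From Pilot Require Import Defs.
From HB Require Import structures.
From mathcomp Require Import all_boot all_order all_algebra reals ring lra.
From Stdlib Require List.
Import Order.TTheory GRing.Theory Num.Theory.
Set Implicit Arguments. Unset Strict Implicit. Unset Printing Implicit Defensive.
Local Open Scope ring_scope.

(* Every element of H(A) fixes oo and, near oo, is a single Moebius map fixing
   oo, i.e. agrees with an affine map x |-> a x + b (a > 0) on some ray
   [M, +oo).  This germ at +oo is multiplicative, so commutators of elements
   of H(A) have translation germs, and elements of H(A)'' have trivial germs:
   each s in S is the identity on a ray [M_s, +oo), hence on a common ray
   [M, +oo), and (being injective) s preserves its complement.
   The hyperbolic matrix [[2,1],[1,1]] of SL_2(Z), conjugated by an integer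
   translation N, fixes N + golden' < N + golden, where golden and golden' are
   the roots of x^2 = x + 1.  The map equal to it between these two fixed
   points and to the identity elsewhere is a non-trivial element h_S of H(A);
   for N + golden' >= M it is supported in [M, +oo), so it commutes with every
   s in S. *)

Lemma det_mx22 (R : comNzRingType) (g : 'M[R]_2) :
  \det g = g 0 0 * g 1 1 - g 0 1 * g 1 0.
Proof.
rewrite (expand_det_row _ 0) !big_ord_recl big_ord0 /cofactor !det_mx11 !mxE /=.
have -> : lift 0 (0 : 'I_1) = 1 :> 'I_2 by apply/val_inj.
have -> : lift 1 (0 : 'I_1) = 0 :> 'I_2 by apply/val_inj.
rewrite expr0 expr1; ring.
Qed.

Lemma mxtrace_mx22 (R : comNzRingType) (g : 'M[R]_2) : \tr g = g 0 0 + g 1 1.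
Proof.
rewrite /mxtrace !big_ord_recl big_ord0 addr0.
by have -> : lift ord0 (ord0 : 'I_1) = 1 :> 'I_2 by apply/val_inj.
Qed.

Lemma gen_closed (T : Type) (X P : (T -> T) -> Prop) :
  P id -> (forall f g, P f -> P g -> P (f \o g)) ->
  (forall x y, P x -> cancel x y -> cancel y x -> P y) ->
  (forall x, X x -> P x) -> forall f, gen X f -> P f.
Proof.
move=> Pid Pcomp Pinv XP h; elim=> [|x f /XP Px _ Pf | x y f /XP Px xy yx _ Pf].
- exact: Pid.
- exact: Pcomp.
- by apply: Pcomp => //; apply: Pinv Px _ _.
Qed.

Lemma commute_disjoint_support (T : Type) (U : pred T) (s h : T -> T) :
  {in U, s =1 id} -> injective s -> {in predC U, h =1 id} ->
  {homo h : x / x \in U} -> h \o s =1 s \o h.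
Proof.
move=> sU s_inj hU hUU x /=; case: (boolP (x \in U)) => xU.
  by rewrite sU // sU ?hUU.
have sxU : s x \notin U.
  by apply: contra xU => sxU; rewrite -(s_inj _ _ (sU _ sxU)).
by rewrite !hU.
Qed.

Lemma eventually_seq (R : realDomainType) (T : Type) (S : seq T) (P : T -> R -> Prop) :
  (forall s, List.In s S -> exists M, forall x, M <= x -> P s x) ->
  exists M, forall s, List.In s S -> forall x, M <= x -> P s x.
Proof.
elim: S => [|s S IH] PS; first by exists 0.
have [M1 H1] := IH (fun t St => PS t (or_intror St)).
have [M2 H2] := PS s (or_introl erefl).
exists (Num.max M1 M2) => t St x; rewrite ge_max => /andP[M1x M2x].
by case: St => [<- | /H1]; [apply: H2 | apply].
Qed.

Section GermAtInfinity.
Variable R : realType.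
Implicit Types (f g : P1 R -> P1 R) (a b c d : R).

Definition germ_oo f a b :=
  exists M : R, forall x, M <= x -> f (Some x) = Some (a * x + b).

Lemma germ_oo_id : germ_oo id 1 0.
Proof. by exists 0 => x _; rewrite mul1r addr0. Qed.

Lemma germ_oo_comp f g a1 b1 a2 b2 : 0 < a2 -> germ_oo f a1 b1 -> germ_oo g a2 b2 ->
  germ_oo (f \o g) (a1 * a2) (a1 * b2 + b1).
Proof.
move=> a2p [Mf Hf] [Mg Hg].
exists (Num.max Mg ((Mf - b2) / a2)) => x; rewrite ge_max => /andP[xg xf].
rewrite /= Hg // Hf; first by congr Some; ring.
by rewrite ler_pdivrMr // in xf; lra.
Qed.

Lemma germ_oo_inv f f' a b : 0 < a -> germ_oo f a b -> cancel f f' ->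
  germ_oo f' a^-1 (- b / a).
Proof.
move=> ap [M H] fK; exists (a * M + b) => y yM.
have -> : Some y = f (Some ((y - b) / a)).
  by rewrite H; [congr Some; field; lra | rewrite ler_pdivlMr //; lra].
by rewrite fK; congr Some; field; lra.
Qed.

Lemma germ_oo_commutator f g f' g' a b c d : 0 < a -> 0 < c ->
  germ_oo f a b -> germ_oo g c d -> cancel f f' -> cancel g g' ->
  germ_oo (f' \o g' \o f \o g) 1 (((a - 1) * d + b * (1 - c)) / (a * c)).
Proof.
move=> ap cp Gf Gg fK gK.
have cVp : 0 < c^-1 by rewrite invr_gt0.
have := germ_oo_comp cp (germ_oo_comp ap
  (germ_oo_comp cVp (germ_oo_inv ap Gf fK) (germ_oo_inv cp Gg gK)) Gf) Gg.
by congr germ_oo; field; lra.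
Qed.

Definition affine_at_oo f := f None = None /\ exists a b, 0 < a /\ germ_oo f a b.
Definition translation_at_oo f := f None = None /\ exists b, germ_oo f 1 b.
Definition identity_at_oo f := [/\ f None = None, germ_oo f 1 0 & injective f].
End GermAtInfinity.

Section DerivedSeries.
Variable R : realType.
Implicit Types (f : P1 R -> P1 R) (X : (P1 R -> P1 R) -> Prop).

Lemma derived_translation_at_oo X f :
  (forall u, X u -> affine_at_oo u) -> derived X f -> translation_at_oo f.
Proof.
move=> Xaff; move: f; apply: gen_closed.
- by split=> //; exists 0; apply: germ_oo_id.
- move=> f g [fN [b Gf]] [gN [c Gg]]; split; first by rewrite /= gN fN.
  by eexists; have := germ_oo_comp ltr01 Gf Gg; rewrite mulr1; apply.
- move=> x y [xN [b Gx]] xK _; split; first by rewrite -xN xK.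
  by eexists; have := germ_oo_inv ltr01 Gx xK; rewrite invr1; apply.
move=> h [f [g [f' [g' [/Xaff[fN [a [b [ap Gf]]]] /Xaff[gN [c [d [cp Gg]]]]]]]]].
move=> [_ fK] [_ gK] ->; split; first by rewrite /= gN fN -{1}gN gK -{1}fN fK.
by eexists; apply: germ_oo_commutator ap cp Gf Gg fK gK.
Qed.

Lemma derived_identity_at_oo X f :
  (forall u, X u -> translation_at_oo u) -> derived X f -> identity_at_oo f.
Proof.
move=> Xtr; move: f; apply: gen_closed.
- by split=> //; apply: germ_oo_id.
- move=> f g [fN Gf f_inj] [gN Gg g_inj]; split; first by rewrite /= gN fN.
    by have := germ_oo_comp ltr01 Gf Gg; rewrite mulr1 mulr0 addr0.
  exact: inj_comp.
- move=> x y [xN Gx _] xK yK; split; first by rewrite -xN xK.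
    by have := germ_oo_inv ltr01 Gx xK; rewrite invr1 oppr0 mul0r.
  exact: can_inj yK.
move=> h [f [g [f' [g' [/Xtr[fN [b Gf]] /Xtr[gN [d Gg]]]]]]].
move=> [f'K fK] [g'K gK] ->; split; first by rewrite /= gN fN -{1}gN gK -{1}fN fK.
  have := germ_oo_commutator ltr01 ltr01 Gf Gg fK gK.
  by rewrite !subrr mul0r mulr0 addr0 mul0r.
by move=> p q /= /(can_inj f'K) /(can_inj g'K) /(can_inj fK) /(can_inj gK).
Qed.
End DerivedSeries.

Section Breakpoints.
Variable R : realType.
Implicit Types (u v w : P1 R) (l : seq (P1 R)).

Definition ray (M : R) : pred (P1 R) := fun w => if w is Some x then M <= x else true.

Lemma lt1_trans : transitive (@lt1 R).
Proof. by move=> [y|] [x|] [z|] //=; apply: lt_trans. Qed.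

Lemma le1_Some (x y : R) : le1 (Some x) (Some y) = (x <= y).
Proof. by rewrite /le1 /= le_eqVlt; congr orb; apply/eqP/eqP => [[]|->]. Qed.

Lemma le1_oo w : le1 w None.
Proof. by case: w => [x|] //; rewrite /le1 /= orbT. Qed.

Lemma ray_sub_arc (y : R) v w : v = None \/ ~~ lt1 (Some y) v ->
  w \in ray y -> Defs.arc (Some y) v w.
Proof.
have yw : w \in ray y -> le1 (Some y) w by case: w => [x|] //; rewrite le1_Some.
rewrite /Defs.arc => -[-> /yw -> | /negbTE -> /yw ->] //=; exact: le1_oo.
Qed.

Lemma arc_contains_ray l : (0 < size l)%N -> sorted (@lt1 R) l ->
  exists2 i, (i < size l)%N & exists M, forall w, w \in ray M ->
    Defs.arc (nth None l i) (nth None l (i.+1 %% size l)) w.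
Proof.
case/lastP: l => [//|l [y|]] _ l_sorted.
  exists (size l); rewrite size_rcons // modnn nth_rcons ltnn eqxx.
  exists y => w; apply: ray_sub_arc; right.
  case: l l_sorted => [|v l] //=; first by rewrite /lt1 ltxx.
  move=> /(order_path_min lt1_trans) /allP /(_ (Some y)).
  rewrite mem_rcons mem_head => /(_ isT); case: v => [x|] //= yx.
  by rewrite -leNgt ltW.
case/lastP: l l_sorted => [|l [y|]] l_sorted.
- by exists 0%N => //; exists 0 => w _; rewrite /Defs.arc /= le1_oo orbT.
- exists (size l); first by rewrite !size_rcons ltnW.
  rewrite !size_rcons modn_small // !nth_rcons size_rcons ltnn eqxx ltnSn ltnn eqxx.
  by exists y => w; apply: ray_sub_arc; left.
- by case: l l_sorted => [|v l] //=; rewrite rcons_path last_rcons andbF.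
Qed.

Lemma mob1 w : mob 1%:M w = w.
Proof.
have [one_neq0 zero_neq1] : (1 == 0 :> 'I_2) = false /\ (0 == 1 :> 'I_2) = false by [].
rewrite /mob !mxE eqxx one_neq0 zero_neq1 mulr0n mulr1n.
by case: w => [x|]; rewrite ?eqxx // mul0r add0r oner_eq0 mul1r addr0 divr1.
Qed.

Lemma mob_affine (g : 'M[R]_2) : \det g = 1 -> mob g None = None ->
  exists a b, 0 < a /\ forall x, mob g (Some x) = Some (a * x + b).
Proof.
move=> det1; rewrite /mob; case: (g 1 0 =P 0) => // c0 _.
rewrite det_mx22 c0 mulr0 subr0 in det1.
have d0 : g 1 1 != 0 by apply: contra_eq_neq det1 => ->; rewrite mulr0 eq_sym oner_eq0.
exists (g 0 0 / g 1 1), (g 0 1 / g 1 1); split.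
  have -> : g 0 0 / g 1 1 = g 0 0 ^+ 2.
    by apply: (mulIf d0); rewrite mulfVK // expr2 -mulrA det1 mulr1.
  by rewrite exprn_even_gt0 //; apply: contra_eq_neq det1 => ->; rewrite mul0r eq_sym oner_eq0.
by move=> x; rewrite c0 mul0r add0r (negbTE d0); congr Some; field.
Qed.

Lemma H_affine_at_oo (A : {pred R}) f : H_ A f -> affine_at_oo f.
Proof.
case=> -[_ [[g [[det1 _] fg]] | [s [s_gt0 s_sorted s_pieces s_arcs]]]] fN; split => //.
  have [a [b [ap gab]]] := mob_affine det1 (etrans (esym (fg _)) fN).
  by exists a, b; split => //; exists 0 => x _; rewrite fg.
have := @arc_contains_ray (map fst s); rewrite size_map.
move=> /(_ s_gt0 s_sorted) [i ilt [M Mray]].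
have [_ [det1 _]] := s_pieces i ilt.
have gN : mob (nth 0 (map snd s) i) None = None.
  by rewrite -(s_arcs i ilt None (Mray None isT)).
have [a [b [ap gab]]] := mob_affine det1 gN.
by exists a, b; split => //; exists M => x Mx; rewrite (s_arcs i ilt) ?Mray.
Qed.

Lemma derived2_H_identity_at_oo (A : {pred R}) f :
  derived (derived (H_ A)) f -> identity_at_oo f.
Proof.
apply: derived_identity_at_oo => u; apply: derived_translation_at_oo => v.
exact: H_affine_at_oo.
Qed.
End Breakpoints.

Section GoldenBump.
Variable R : realType.
Implicit Types (u x N : R).

Definition golden : R := (1 + Num.sqrt 5) / 2.
Definition golden' : R := (1 - Num.sqrt 5) / 2.

Lemma golden_sqr : golden * golden = golden + 1 /\ golden' * golden' = golden' + 1.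
Proof.
have s5 : Num.sqrt 5 * Num.sqrt 5 = 5 :> R by rewrite -expr2 sqr_sqrtr.
by rewrite /golden /golden'; split; nra.
Qed.

Lemma golden_bounds : [/\ -1 < golden', golden' < -(1/2), 3/2 < golden & golden < 2].
Proof.
have s5 : Num.sqrt 5 * Num.sqrt 5 = 5 :> R by rewrite -expr2 sqr_sqrtr.
have s5_ge0 : 0 <= Num.sqrt 5 :> R by apply: sqrtr_ge0.
have [s5_gt2 s5_lt3] : 2 < Num.sqrt 5 :> R /\ Num.sqrt 5 < 3 :> R by split; nra.
by rewrite /golden /golden'; split; lra.
Qed.

Definition cat_map u := (2 * u + 1) / (u + 1).
Definition cat_map_inv u := (u - 1) / (2 - u).

Definition golden_bump u := if golden' <= u <= golden then cat_map u else u.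
Definition golden_unbump u := if golden' <= u <= golden then cat_map_inv u else u.

Lemma cat_map_subr_fixed p u : p * p = p + 1 -> u + 1 != 0 ->
  cat_map u - p = (2 - p) * (u - p) / (u + 1).
Proof.
move=> pp u1; apply: (mulIf u1); rewrite /cat_map mulrBl !divfK //.
by transitivity ((2 - p) * (u - p) - (p * p - (p + 1))); [ring | rewrite pp subrr subr0].
Qed.

Lemma cat_map_inv_subr_fixed p u : p * p = p + 1 -> 2 - u != 0 ->
  cat_map_inv u - p = (1 + p) * (u - p) / (2 - u).
Proof.
move=> pp u2; apply: (mulIf u2); rewrite /cat_map_inv mulrBl !divfK //.
by transitivity ((1 + p) * (u - p) + (p * p - (p + 1))); [ring | rewrite pp subrr addr0].
Qed.

Lemma cat_map_golden : cat_map golden = golden /\ cat_map golden' = golden'.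
Proof.
have [e e'] := golden_sqr; have [? ? ? ?] := golden_bounds.
by split; apply/eqP; rewrite -subr_eq0 cat_map_subr_fixed ?subrr ?mulr0 ?mul0r // gt_eqF //; lra.
Qed.

Lemma cat_map_in u : golden' <= u <= golden -> golden' <= cat_map u <= golden.
Proof.
have [e e'] := golden_sqr; have [? ? ? ?] := golden_bounds; move=> /andP[? ?].
have u1 : 0 < u + 1 by lra.
apply/andP; split.
  rewrite -subr_ge0 cat_map_subr_fixed ?gt_eqF //.
  by apply: divr_ge0; [apply: mulr_ge0 |]; lra.
rewrite -subr_le0 cat_map_subr_fixed ?gt_eqF // pmulr_lle0 ?invr_gt0 //.
by apply: mulr_ge0_le0; lra.
Qed.

Lemma cat_map_inv_in u : golden' <= u <= golden -> golden' <= cat_map_inv u <= golden.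
Proof.
have [e e'] := golden_sqr; have [? ? ? ?] := golden_bounds; move=> /andP[? ?].
have u2 : 0 < 2 - u by lra.
apply/andP; split.
  rewrite -subr_ge0 cat_map_inv_subr_fixed ?gt_eqF //.
  by apply: divr_ge0; [apply: mulr_ge0 |]; lra.
rewrite -subr_le0 cat_map_inv_subr_fixed ?gt_eqF // pmulr_lle0 ?invr_gt0 //.
by apply: mulr_ge0_le0; lra.
Qed.

Lemma cat_mapK u : golden' <= u <= golden -> cat_map_inv (cat_map u) = u.
Proof.
have [? ? ? ?] := golden_bounds; move=> /andP[? ?].
by rewrite /cat_map /cat_map_inv; field; rewrite !gt_eqF //; lra.
Qed.

Lemma cat_map_invK u : golden' <= u <= golden -> cat_map (cat_map_inv u) = u.
Proof.
have [? ? ? ?] := golden_bounds; move=> /andP[? ?].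
by rewrite /cat_map /cat_map_inv; field; rewrite !gt_eqF //; lra.
Qed.

Lemma golden_bumpK : cancel golden_bump golden_unbump.
Proof.
move=> u; rewrite /golden_bump /golden_unbump.
by have [uI | /negbTE uI] := boolP (golden' <= u <= golden); rewrite ?uI ?cat_map_in ?cat_mapK.
Qed.

Lemma golden_unbumpK : cancel golden_unbump golden_bump.
Proof.
move=> u; rewrite /golden_bump /golden_unbump.
by have [uI | /negbTE uI] := boolP (golden' <= u <= golden);
  rewrite ?uI ?cat_map_inv_in ?cat_map_invK.
Qed.

Lemma golden_bump_id u : (golden <= u) || (u <= golden') -> golden_bump u = u.
Proof.
have [cg cg'] := cat_map_golden; rewrite /golden_bump => uO.
case: ifP => // /andP[? ?].
by case/orP: uO => ?; [have -> : u = golden by lra | have -> : u = golden' by lra].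
Qed.

Lemma golden_bump_ge u : golden' <= u -> golden' <= golden_bump u.
Proof.
rewrite /golden_bump; case: ifP => // uI _.
by have /andP[] := cat_map_in uI.
Qed.

Lemma golden_bump_half : golden_bump (1 / 2) != 1 / 2.
Proof.
have [? ? ? ?] := golden_bounds.
rewrite /golden_bump ifT; last by apply/andP; split; lra.
rewrite /cat_map (_ : (2 * (1 / 2) + 1) / (1 / 2 + 1) = 4 / 3 :> R); last by field.
by apply/eqP => ?; lra.
Qed.

Definition golden_bump_at N x := N + golden_bump (x - N).
Definition golden_unbump_at N x := N + golden_unbump (x - N).

Lemma golden_bump_atK N : cancel (golden_bump_at N) (golden_unbump_at N).
Proof.
by move=> x; rewrite /golden_bump_at /golden_unbump_at addrAC subrr add0r golden_bumpK subrKC.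
Qed.

Lemma golden_unbump_atK N : cancel (golden_unbump_at N) (golden_bump_at N).
Proof.
by move=> x; rewrite /golden_bump_at /golden_unbump_at addrAC subrr add0r golden_unbumpK subrKC.
Qed.

Lemma golden_bump_at_inside N x : N + golden' <= x <= N + golden ->
  golden_bump_at N x = N + cat_map (x - N).
Proof. by move=> xI; rewrite /golden_bump_at /golden_bump lerBrDl lerBlDl xI. Qed.

Lemma golden_bump_at_outside N x : (N + golden <= x) || (x <= N + golden') ->
  golden_bump_at N x = x.
Proof. by move=> xO; rewrite /golden_bump_at golden_bump_id ?subrKC // lerBrDl lerBlDl. Qed.

Lemma golden_bump_at_ge N x : N + golden' <= x -> N + golden' <= golden_bump_at N x.
Proof. by rewrite -lerBrDl lerD2l => /golden_bump_ge. Qed.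

Lemma golden_bump_at_half N : golden_bump_at N (N + 1 / 2) != N + 1 / 2.
Proof.
by rewrite /golden_bump_at addrAC subrr add0r (inj_eq (addrI N)) golden_bump_half.
Qed.

Lemma golden_bump_at_ray N M : M <= N + golden' ->
  {homo omap (golden_bump_at N) : w / w \in ray M}.
Proof.
move=> MN [x|] //= Mx.
have [xN | /ltW Nx] := leP (N + golden') x; last by rewrite golden_bump_at_outside ?Nx ?orbT.
exact: le_trans MN (golden_bump_at_ge xN).
Qed.

Lemma golden_bump_at_off_ray N M : M <= N + golden' ->
  {in predC (ray M), omap (golden_bump_at N) =1 id}.
Proof.
move=> MN [x|] //; rewrite inE /= -ltNge => xM.
by rewrite golden_bump_at_outside // (ltW (lt_le_trans xM MN)) orbT.
Qed.

(* [[2,1],[1,1]] conjugated by the translation x |-> x + N. *)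
Definition cat_mx N : 'M[R]_2 :=
  \matrix_(i < 2, j < 2) if i == 0 then (if j == 0 then 2 + N else 1 - N - N * N)
                         else (if j == 0 then 1 else 1 - N).

Lemma cat_mxE N : [/\ cat_mx N 0 0 = 2 + N, cat_mx N 0 1 = 1 - N - N * N,
  cat_mx N 1 0 = 1 & cat_mx N 1 1 = 1 - N].
Proof.
have one_neq0 : (1 == 0 :> 'I_2) = false by [].
by rewrite !mxE eqxx one_neq0; split.
Qed.

Lemma cat_mx_det N : \det (cat_mx N) = 1.
Proof. by rewrite det_mx22; case: (cat_mxE N) => -> -> -> ->; ring. Qed.

Lemma cat_mx_hyperbolic N : hyperbolic (cat_mx N).
Proof.
rewrite /hyperbolic mxtrace_mx22; case: (cat_mxE N) => -> _ _ ->.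
by rewrite (_ : 2 + N + (1 - N) = 3) ?ger0_norm; [lra | lra | ring].
Qed.

Lemma mob_cat_mx N x : N + golden' <= x ->
  mob (cat_mx N) (Some x) = Some (N + cat_map (x - N)).
Proof.
have [? ? ? ?] := golden_bounds; move=> Nx.
rewrite /mob; case: (cat_mxE N) => -> -> -> ->; rewrite mul1r gt_eqF; last by lra.
by congr Some; rewrite /cat_map; field; rewrite gt_eqF //; lra.
Qed.

Lemma cat_mx_fixed N : mob (cat_mx N) (Some (N + golden)) = Some (N + golden)
  /\ mob (cat_mx N) (Some (N + golden')) = Some (N + golden').
Proof.
have [cg cg'] := cat_map_golden; have [? ? ? ?] := golden_bounds.
have addKN a : N + a - N = a by rewrite addrC addKr.
by rewrite !mob_cat_mx ?addKN ?cg ?cg' //; lra.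
Qed.
End GoldenBump.

Arguments golden {R}.
Arguments golden' {R}.

Section BumpInH.
Variables (R : realType) (A : {pred R}).
Hypothesis subringA : subring_closed A.
HB.instance Definition _ := GRing.isSubringClosed.Build R A subringA.

Lemma SL2_1 : SL2 A 1%:M.
Proof. by split=> [|i j]; rewrite ?det1 // mxE; case: (i == j); rewrite ?rpred0 ?rpred1. Qed.

Lemma cat_mx_SL2 N : N \in A -> SL2 A (cat_mx N).
Proof.
move=> NA; split=> [|i j]; first exact: cat_mx_det.
rewrite mxE; case: (i == 0); case: (j == 0);
  by repeat (apply: rpredB || apply: rpredD || apply: rpredM || apply: rpred_nat || apply: rpred1).
Qed.

Lemma golden_breakpoints N : N \in A ->
  P_ A (Some (N + golden')) /\ P_ A (Some (N + golden)).
Proof.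
move=> NA; have [fix_g fix_g'] := cat_mx_fixed N.
by split; exists (cat_mx N); (split; [apply: cat_mx_SL2 | split; [apply: cat_mx_hyperbolic |]]).
Qed.

Lemma golden_bump_at_in_H N : N \in A -> H_ A (omap (golden_bump_at N)).
Proof.
move=> NA; have [? ? ? ?] := golden_bounds R; have [Pg' Pg] := golden_breakpoints NA.
have lt_breaks : N + golden' < N + golden by rewrite ltrD2l; lra.
split=> //; split.
  by exists (omap (golden_unbump_at N)); apply: omapK;
    [apply: golden_bump_atK | apply: golden_unbump_atK].
right; exists [:: (Some (N + golden'), cat_mx N); (Some (N + golden), 1%:M)].
split=> //=; first by rewrite lt_breaks.
  by case=> [|[|]] //= _; split=> //; [apply: cat_mx_SL2 | apply: SL2_1].
case=> [|[|]] //= _ w; rewrite /Defs.arc /=.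
  rewrite lt_breaks; case: w => [x|] //; rewrite !le1_Some => xI.
  by rewrite mob_cat_mx /= ?golden_bump_at_inside //; case/andP: xI.
rewrite ltNge (ltW lt_breaks) mob1 /=; case: w => [x|] //; rewrite !le1_Some => xO.
by rewrite /= golden_bump_at_outside.
Qed.
End BumpInH.

Theorem proposition7 (R : realType) (A : {pred R}) (hA : subring_closed A)
  (S : seq (P1 R -> P1 R)) :
  (forall s, List.In s S -> derived (derived (H_ A)) s) ->
  exists h : P1 R -> P1 R,
    [/\ H_ A h, (exists p, h p <> p)
      & forall s, List.In s S -> forall p, h (s p) = s (h p)].
Proof.
move=> S_derived2.
have S_id s : List.In s S -> identity_at_oo s.
  by move=> /S_derived2 /derived2_H_identity_at_oo.
have [M S_fix] : exists M : R, forall s, List.In s S -> forall x, M <= x -> s (Some x) = Some x.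
  apply: eventually_seq => s /S_id [_ [M sM] _].
  by exists M => x /sM; rewrite mul1r addr0.
have [n Mn] : exists n : nat, M - golden' < n%:R.
  exists (Num.Def.archi_bound `|M - golden'|).
  exact: le_lt_trans (ler_norm _) (archi_boundP (normr_ge0 _)).
have MN : M <= n%:R + golden' by rewrite -lerBlDr ltW.
exists (omap (golden_bump_at n%:R)); split.
- apply: (golden_bump_at_in_H hA).
  exact: (@rpred_nat _ (HB.pack A (GRing.isSubringClosed.Build R A hA))).
- by exists (Some (n%:R + 1 / 2)) => -[] /eqP; rewrite (negbTE (golden_bump_at_half _)).
move=> s Ss; have [sN _ s_inj] := S_id s Ss.
apply: (commute_disjoint_support (U := ray M)) => //.
- by case=> [x|] //= /S_fix; apply.
- exact: golden_bump_at_off_ray.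
- exact: golden_bump_at_ray.
Qed.
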